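(* Let $D\subset\mathbb{C}^n$ be an indecomposable central hyperplane arrangement of degree $d$, the cone of $Z=Z_1\cup\dots\cup Z_d\subset\mathbb{P}^{n-1}$. Let $k$ be an integer and $I\subset\{1,\dots,d-1\}$ with $|I|=k-1$, and put $Z(I)=\bigcup_{i\in I}Z_i$. Assume $k\ge n$ and $Z(I)\cup Z_d$ is a divisor with normal crossings on $\mathbb{P}^{n-1}$. Then $\dim V(I)'=\binom{k-1}{n-1}$.
   Context: Choose coordinates with $Z_d=\{x_n=0\}$, $Y'=\mathbb{P}^{n-1}\setminus Z_d\cong\mathbb{C}^{n-1}$, let $g_i$ ($i<d$) be a degree-one polynomial defining $Z_i\cap Y'$, $\omega_i=dg_i/g_i$, and let $h^\alpha$ be a formal generator, where $\alpha=(\alpha_i)$ with $\alpha_i=1-\frac kd$ for $i\in I$ and $\alpha_i=-\frac kd$ for $i\in\{1,\dots,d-1\}\setminus I$. $V(I)'$ is the $\mathbb{C}$-vector space of (twisted) rational $(n-1)$-forms on $Y'$ spanned by $\omega_{i_1}\wedge\dots\wedge\omega_{i_{n-1}}h^\alpha$ with $\{i_1,\dots,i_{n-1}\}\subset I$. Indecomposable: no nontrivial decomposition $\mathbb{C}^n=W'\times W''$ with $D$ the union of pull-backs of arrangements on $W',W''$. *)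

From HB Require Import structures.
From mathcomp Require Import all_boot all_order all_algebra.
From mathcomp Require Import reals.
From mathcomp Require Import complex.

Set Implicit Arguments.
Unset Strict Implicit.
Unset Printing Implicit Defensive.

Import Order.TTheory GRing.Theory Num.Theory.
Local Open Scope ring_scope.

Section Defs.
Variable R : realType.
Local Notation C := R[i].

(* A central hyperplane arrangement in C^n of degree d is given by d linear
   forms L i : 'rV_n (row of coefficients), hyperplane i = ker (L i).
   Paper index i (1 <= i <= d) corresponds to the ordinal i-1 : 'I_d. *)

Definition lform n (l x : 'rV[C]_n) : C := \sum_(j < n) l 0 j * x 0 j.

Definition is_arrangement n d (L : 'I_d -> 'rV[C]_n) : Prop :=
  (forall i, L i != 0) /\
  (forall i j, i != j -> \rank (col_mx (L i) (L j)) = 2%N).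

(* Decomposable: after a linear change of coordinates x = P y,
   C^n = C^p x C^(n-p) with 0 < p < n and each hyperplane is the pull-back
   of a hyperplane of the first or of the second factor. *)
Definition decomposable n d (L : 'I_d -> 'rV[C]_n) : Prop :=
  exists (P : 'M[C]_n) (p : nat),
    [/\ P \in unitmx, (0 < p)%N, (p < n)%N &
      forall i, (forall j : 'I_n, (p <= j)%N -> (L i *m P) 0 j = 0) \/
                (forall j : 'I_n, (j < p)%N -> (L i *m P) 0 j = 0)].

Definition indecomposable n d (L : 'I_d -> 'rV[C]_n) : Prop :=
  ~ decomposable L.

(* Coordinates chosen so that Z_d (ordinal d-1) is {x_n = 0} (ordinal n-1). *)
Definition last_is_xn n d (L : 'I_d -> 'rV[C]_n) : Prop :=
  forall i : 'I_d, val i = d.-1 ->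
    forall j : 'I_n, (L i 0 j != 0) = (val j == n.-1).

(* A union of (distinct) hyperplanes of P^{n-1} indexed by S is a divisor with
   normal crossings iff any at most n of the defining linear forms are
   linearly independent. *)
Definition normal_crossings n d (L : 'I_d -> 'rV[C]_n) (S : {set 'I_d}) : Prop :=
  forall T : {set 'I_d}, T \subset S -> (#|T| <= n)%N ->
    row_free (\matrix_(r < #|T|) L (enum_val r)).

(* Y' = P^{n-1} \ Z_d = {x in C^n : x_n = 1} ~ C^{n-1}, with affine
   coordinates x_1, ..., x_{n-1}. *)
Definition Yprime n (x : 'rV[C]_n) : Prop :=
  forall j : 'I_n, val j = n.-1 -> x 0 j = 1.

(* g_i = restriction of L i to Y', a degree-one polynomial in x_1..x_{n-1};
   dg_i = sum_(c < n-1) (L i)_c dx_c.  For a set S of indices listed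
   increasingly as i_1 < ... < i_{n-1}, the rational (n-1)-form
     omega_{i_1} /\ ... /\ omega_{i_{n-1}} ,  omega_i = dg_i / g_i,
   equals  coef_S(x) dx_1 /\ ... /\ dx_{n-1}  with
     coef_S(x) = det [ (L i_r)_c ]_(r,c < n-1) / prod_(i in S) g_i(x).
   We record a top-degree rational form on Y' by this coefficient. *)
Definition dlog_wedge n d (L : 'I_d -> 'rV[C]_n) (S : {set 'I_d})
    (x : 'rV[C]_n) : C :=
  \det (\matrix_(r < n.-1, c < n.-1)
          (nth 0 (map L (enum S)) r) 0 (widen_ord (leq_pred n) c))
  / \prod_(i in S) lform (L i) x.

(* Linear algebra over C for (rational) functions, compared on a dense open
   set U where they are all regular. *)
Definition in_span (T J : Type) (s : seq J) (U : T -> Prop) (f : J -> T -> C)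
    (h : T -> C) : Prop :=
  exists c : J -> C, forall x, U x -> h x = \sum_(j <- s) c j * f j x.

Definition span_dim (T J : Type) (s : seq J) (U : T -> Prop) (f : J -> T -> C)
    (N : nat) : Prop :=
  exists b : 'I_N -> T -> C,
    [/\ forall r, in_span s U f (b r),
        forall a : 'I_N -> C, (forall x, U x -> \sum_r a r * b r x = 0) ->
          forall r, a r = 0 &
        forall h, in_span s U f h -> in_span (enum 'I_N) U b h].

(* V(I)' (with the common formal factor h^alpha removed): the span of the
   forms omega_{i_1} /\ ... /\ omega_{i_{n-1}} with {i_1..i_{n-1}} in I,
   as functions on Y' \ Z(I). *)
Definition VIprime_dim n d (L : 'I_d -> 'rV[C]_n) (I : {set 'I_d}) (N : nat)
  : Prop :=
  span_dim [seq S : {set 'I_d} <- enum {set 'I_d} | (S \subset I) && (#|S| == n.-1)]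
    (fun x => Yprime x /\ forall i, i \in I -> lform (L i) x != 0)
    (@dlog_wedge n d L) N.

End Defs.

From HB Require Import structures.
From mathcomp Require Import all_boot all_order all_algebra.
From mathcomp Require Import reals complex.
Import Order.TTheory GRing.Theory Num.Theory.
Local Open Scope ring_scope.
Set Implicit Arguments.
Unset Strict Implicit.
Unset Printing Implicit Defensive.

(* The forms omega_S (S a subset of I with n - 1 elements) span V(I)' by
   definition, so only their linear independence needs proof.  Given a relation
   sum_S a_S omega_S = 0 and one S0, restrict it to the line t |-> p + t v of Y'
   along which g_i = t for every i in S0.  The point p is the intersection of
   the Z_i, i in S0, so by normal crossings g_i(p) <> 0 for i in I \ S0.  On the
   line omega_S = det_S / prod_(i in S) g_i with every g_i affine in t, and
   clearing denominators gives the polynomial identity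
   sum_S a_S det_S prod_(i in I \ S) g_i = 0.  At t = 0 each term with S <> S0
   contains a factor g_i(p) = 0 for some i in S0 \ S, which leaves
   a_S0 det_S0 prod_(i in I \ S0) g_i(p) = 0; and det_S0 <> 0 because
   S0 together with Z_d is still normal crossing. *)

Lemma poly_eq0_of_horner (F : numDomainType) (p : {poly F}) :
  (forall t, p.[t] = 0) -> p = 0.
Proof.
move=> p0; apply/eqP; apply: contraT => /max_poly_roots nroots.
have := nroots [seq j%:R | j <- iota 0 (size p)].
rewrite size_map size_iota ltnn; apply; first by apply/allP => t _; apply/rootP.
by rewrite map_inj_uniq ?iota_uniq // => i j /eqP; rewrite eqr_nat => /eqP.
Qed.

Section PartialFractions.
Variables (F : numFieldType) (T J : finType).
Variables (I : {set T}) (S : J -> {set T}).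
Hypothesis sub_S : forall j, S j \subset I.

Lemma partial_fractions_eq0 (G : T -> {poly F}) (c : J -> F) :
  {in I, forall i, G i != 0} ->
  (forall t, {in I, forall i, (G i).[t] != 0} ->
     \sum_j c j / \prod_(i in S j) (G i).[t] = 0) ->
  \sum_j c j *: \prod_(i in I :\: S j) G i = 0.
Proof.
move=> G_neq0 rel; set P := \sum_j _.
have prodG_neq0 : \prod_(i in I) G i != 0 by apply/prodf_neq0.
suff /poly_eq0_of_horner /eqP : forall t, (P * \prod_(i in I) G i).[t] = 0.
  by rewrite mulf_eq0 (negbTE prodG_neq0) orbF => /eqP.
move=> t; rewrite hornerM horner_prod.
have [/exists_inP[i iI /eqP Gi0]|] := boolP [exists i in I, (G i).[t] == 0].
  by rewrite (bigD1 i) //= Gi0 mul0r mulr0.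
rewrite negb_exists_in => /forall_inP Gt_neq0.
suff -> : P.[t] = (\sum_j c j / \prod_(i in S j) (G i).[t]) * \prod_(i in I) (G i).[t].
  by rewrite rel // !mul0r.
rewrite horner_sum mulr_suml; apply: eq_bigr => j _.
rewrite hornerZ horner_prod [\prod_(i in I) _](big_setID (S j)) /=.
rewrite (setIidPr (sub_S j)) mulrA divfK //; apply/prodf_neq0 => i /(subsetP (sub_S j)).
exact: Gt_neq0.
Qed.

Lemma sum_prod_setD_eq0 (al : T -> F) (c : J -> F) (j0 : J) :
  injective S -> (forall j, #|S j| = #|S j0|) ->
  {in I, forall i, (al i == 0) = (i \in S j0)} ->
  \sum_j c j * \prod_(i in I :\: S j) al i = 0 -> c j0 = 0.
Proof.
move=> S_inj cardS al0; rewrite (bigD1 j0) //= [X in _ + X]big1 ?addr0 => [/eqP|j j_neq].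
  rewrite mulf_eq0 => /orP[/eqP //|]; apply: contraTeq => _.
  by apply/prodf_neq0 => i /setDP[iI iS]; rewrite al0.
have /subsetPn[i iS0 iSj] : ~~ (S j0 \subset S j).
  apply: contra j_neq => sub; apply/eqP/S_inj/eqP.
  by rewrite eq_sym eqEcard sub (cardS j) /=.
have iI : i \in I :\: S j by rewrite inE iSj (subsetP (sub_S j0)).
by rewrite (bigD1 i) //= (eqP (_ : al i == 0)) ?mul0r ?mulr0 // al0 // (setDP iI).1.
Qed.

End PartialFractions.

Section LinearForms.
Variables (R : realType) (n d : nat) (L : 'I_d -> 'rV[R[i]]_n).

Definition forms_mx (T : {set 'I_d}) : 'M_(#|T|, n) :=
  \matrix_(r < #|T|) L (enum_val r).

Lemma lformDZ (l x y : 'rV[R[i]]_n) t :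
  lform l (x + t *: y) = lform l x + lform l y * t.
Proof.
rewrite /lform mulr_suml -big_split; apply: eq_bigr => j _.
by rewrite !mxE mulrDr; congr (_ + _); rewrite mulrCA mulrC.
Qed.

Lemma forms_mx_row_coord (T : {set 'I_d}) r (x : 'rV[R[i]]_n) :
  (x *m (forms_mx T)^T) 0 r = lform (L (enum_val r)) x.
Proof. by rewrite !mxE; apply: eq_bigr => j _; rewrite !mxE mulrC. Qed.

Lemma row_free_lform_interpolate (T : {set 'I_d}) (b : 'I_d -> R[i]) :
  row_free (forms_mx T) -> exists x, {in T, forall i, lform (L i) x = b i}.
Proof.
move=> free_T; have /row_fullP[X XT] : row_full (forms_mx T)^T.
  by rewrite /row_full mxrank_tr.
exists ((\row_(r < #|T|) b (enum_val r)) *m X) => i iT.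
have <- : enum_val (enum_rank_in iT i) = i by rewrite enum_rankK_in.
by rewrite -forms_mx_row_coord -mulmxA XT mulmx1 mxE.
Qed.

Lemma row_free_lform_neq0 (T : {set 'I_d}) i (y : 'rV[R[i]]_n) :
  row_free (forms_mx T) -> #|T| = n -> i \in T -> y != 0 ->
  {in T :\ i, forall j, lform (L j) y = 0} -> lform (L i) y != 0.
Proof.
move=> free_T cardT iT y_neq0 y_ker; apply: contra y_neq0 => /eqP yi0.
have /row_fullP[X XT] : row_full (forms_mx T).
  by rewrite /row_full (eqP free_T) cardT.
have yT0 : y *m (forms_mx T)^T = 0.
  apply/matrixP => c r; rewrite (ord1 c) forms_mx_row_coord mxE.
  have [->|ri] := eqVneq (enum_val r) i; first exact: yi0.
  by apply: y_ker; rewrite !inE ri enum_valP.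
by rewrite -[y]mulmx1 -trmx1 -XT trmx_mul mulmxA yT0 mul0mx.
Qed.

End LinearForms.

Section LastHyperplane.
Variables (R : realType) (m d : nat) (L : 'I_d -> 'rV[R[i]]_m.+1) (last : 'I_d).
Hypothesis L_last : forall j : 'I_m.+1, (L last 0 j != 0) = (val j == m).

Definition wedge_minor (S : {set 'I_d}) : 'M[R[i]]_m :=
  \matrix_(r < m, c < m) (nth 0 (map L (enum S)) r) 0 (widen_ord (leq_pred m.+1) c).

Lemma dlog_wedgeE S x :
  dlog_wedge L S x = \det (wedge_minor S) / \prod_(i in S) lform (L i) x.
Proof. by []. Qed.

Lemma lform_split_last (l x : 'rV[R[i]]_m.+1) :
  lform l x =
    \sum_(c < m) l 0 (widen_ord (leq_pred m.+1) c) * x 0 (widen_ord (leq_pred m.+1) c)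
    + l 0 ord_max * x 0 ord_max.
Proof.
rewrite /lform big_ord_recr; congr (_ + _); apply: eq_bigr => c _.
by have -> : widen_ord (leqnSn m) c = widen_ord (leq_pred m.+1) c by apply: val_inj.
Qed.

Lemma lform_last x : lform (L last) x = L last 0 ord_max * x 0 ord_max.
Proof.
rewrite lform_split_last big1 ?add0r // => c _.
have /negbFE/eqP -> : (L last 0 (widen_ord (leq_pred m.+1) c) != 0) = false.
  by rewrite L_last /= ltn_eqF.
by rewrite mul0r.
Qed.

Lemma lform_interpolate_last (S : {set 'I_d}) (b : 'I_d -> R[i]) (z : R[i]) :
  row_free (forms_mx L (S :|: [set last])) -> last \notin S ->
  exists x : 'rV[R[i]]_m.+1,
    x 0 ord_max = z /\ {in S, forall i, lform (L i) x = b i}.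
Proof.
move=> free_S lS.
have /(row_free_lform_interpolate
       (fun i => if i == last then L last 0 ord_max * z else b i)) [x xb] := free_S.
exists x; split.
  have := xb last; rewrite !inE eqxx orbT lform_last => /(_ isT).
  by apply: mulfI; rewrite L_last.
move=> i iS; have /negbTE il : i != last by apply: contraNneq lS => <-.
by rewrite xb ?inE ?iS // il.
Qed.

Lemma det_wedge_minor_neq0 (S : {set 'I_d}) :
  row_free (forms_mx L (S :|: [set last])) -> last \notin S -> #|S| = m ->
  \det (wedge_minor S) != 0.
Proof.
move=> free_S lS cardS; set s := enum S.
have size_s : size s = m by rewrite -cardS cardE.
have [x xP] := fin_all_exists (fun r : 'I_m =>
  lform_interpolate_last (fun i => (index i s == r)%:R) 0 free_S lS).
pose X := \matrix_(c < m, r < m) x r 0 (widen_ord (leq_pred m.+1) c).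
suff /mulmx1_unit[] : wedge_minor S *m X = 1%:M by rewrite unitmxE unitfE.
apply/matrixP => r' r; rewrite !mxE.
have r's : (r' < size s)%N by rewrite size_s.
have [x_max xS] := xP r.
have := xS (nth last s r'); rewrite -mem_enum mem_nth // index_uniq ?enum_uniq //.
rewrite lform_split_last x_max mulr0 addr0 => <- //.
by apply: eq_bigr => c _; rewrite !mxE (nth_map last).
Qed.

End LastHyperplane.

Lemma span_dim_of_free (R : realType) (T : Type) (J : eqType) (j0 : J) (s : seq J)
    (U : T -> Prop) (f : J -> T -> R[i]) :
  uniq s ->
  (forall a : 'I_(size s) -> R[i],
     (forall x, U x -> \sum_r a r * f (nth j0 s r) x = 0) -> forall r, a r = 0) ->
  span_dim s U f (size s).
Proof.
move=> s_uniq s_free.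
have sum_s (F : J -> R[i]) : \sum_(j <- s) F j = \sum_(r < size s) F (nth j0 s r).
  by rewrite (big_nth j0) big_mkord.
exists (fun r => f (nth j0 s r)); split => //.
- move=> r; exists (fun j => (j == nth j0 s r)%:R) => x _; rewrite sum_s (bigD1 r) //=.
  rewrite eqxx mul1r big1 ?addr0 // => r' r'r.
  by rewrite nth_uniq // val_eqE (negbTE r'r) mul0r.
- move=> h [c hc]; exists (fun r : 'I_(size s) => c (nth j0 s r)) => x Ux.
  by rewrite hc // sum_s big_enum.
Qed.

Section DlogWedgeFree.
Variables (R : realType) (m d : nat) (L : 'I_d -> 'rV[R[i]]_m.+1).
Variables (last : 'I_d) (I : {set 'I_d}).
Hypothesis L_last : forall j : 'I_m.+1, (L last 0 j != 0) = (val j == m).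
Hypothesis last_notin_I : last \notin I.
Hypothesis nc : normal_crossings L (I :|: [set last]).

Lemma row_free_setU1 (S : {set 'I_d}) i :
  S \subset I -> #|S| = m -> i \in I :|: [set last] -> i \notin S ->
  row_free (forms_mx L (S :|: [set i])).
Proof.
move=> SI cardS iIl iS; apply: nc; last by rewrite setUC cardsU1 iS cardS.
by rewrite subUset sub1set iIl andbT (subset_trans SI) ?subsetUl.
Qed.

Lemma last_notin_subset (S : {set 'I_d}) : S \subset I -> last \notin S.
Proof. by move=> SI; apply: contra last_notin_I; apply/subsetP. Qed.

Lemma row_free_setU_last (S : {set 'I_d}) :
  S \subset I -> #|S| = m -> row_free (forms_mx L (S :|: [set last])).
Proof.
by move=> SI cardS; rewrite row_free_setU1 ?last_notin_subset // !inE eqxx orbT.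
Qed.

Lemma adapted_line (S0 : {set 'I_d}) : S0 \subset I -> #|S0| = m ->
  exists pt v : 'rV[R[i]]_m.+1,
    [/\ pt 0 ord_max = 1, v 0 ord_max = 0, {in S0, forall i, lform (L i) v = 1}
       & {in I, forall i, (lform (L i) pt == 0) = (i \in S0)}].
Proof.
move=> S0I cardS0; have lS0 := last_notin_subset S0I.
have free0 := row_free_setU_last S0I cardS0.
have [pt [pt1 pt0]] := lform_interpolate_last L_last (fun=> 0) 1 free0 lS0.
have [v [v0 v1]] := lform_interpolate_last L_last (fun=> 1) 0 free0 lS0.
exists pt, v; split => // i iI; have [iS|iS] := boolP (i \in S0).
  by rewrite pt0 ?eqxx.
apply/negbTE/(row_free_lform_neq0 (T := S0 :|: [set i])).
- by apply: row_free_setU1; rewrite // inE iI.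
- by rewrite setUC cardsU1 iS cardS0.
- by rewrite !inE eqxx orbT.
- by apply/eqP => pt_eq0; move: pt1; rewrite pt_eq0 mxE => /eqP; rewrite eq_sym oner_eq0.
move=> j; rewrite !inE => /andP[/negbTE ji]; rewrite ji orbF; exact: pt0.
Qed.

Lemma dlog_wedge_free (s : seq {set 'I_d}) :
  uniq s -> {in s, forall S : {set 'I_d}, S \subset I /\ #|S| = m} ->
  forall a : 'I_(size s) -> R[i],
    (forall x, Yprime x /\ (forall i, i \in I -> lform (L i) x != 0) ->
       \sum_r a r * dlog_wedge L (nth set0 s r) x = 0) ->
  forall r, a r = 0.
Proof.
move=> s_uniq s_sub a rel r0; pose S (r : 'I_(size s)) := nth set0 s r.
have S_sub r : S r \subset I /\ #|S r| = m by apply: s_sub; rewrite mem_nth.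
have S_inj : injective S.
  by move=> r1 r2 /eqP; rewrite nth_uniq // => /eqP/ord_inj.
have [S0I cardS0] := S_sub r0.
have [pt [v [pt1 v0 v1 pt_off]]] := adapted_line S0I cardS0.
pose G i : {poly R[i]} := (lform (L i) pt)%:P + (lform (L i) v)%:P * 'X.
have GE i t : (G i).[t] = lform (L i) (pt + t *: v) by rewrite lformDZ !hornerE.
have G_neq0 : {in I, forall i, G i != 0}.
  move=> i iI; apply/eqP => Gi0; have [iS|iS] := boolP (i \in S r0).
    have /eqP pt0 : lform (L i) pt == 0 by rewrite pt_off.
    have := GE i 1; rewrite Gi0 horner0 lformDZ pt0 v1 // add0r mulr1.
    by move/eqP; rewrite eq_sym oner_eq0.
  have := GE i 0; rewrite Gi0 horner0 scale0r addr0 => /esym/eqP.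
  by rewrite pt_off // (negbTE iS).
have P0 : \sum_r (a r * \det (wedge_minor L (S r))) *: \prod_(i in I :\: S r) G i = 0.
  apply: (partial_fractions_eq0 (fun r => (S_sub r).1) G_neq0) => t Gt.
  rewrite -[RHS](rel (pt + t *: v)); last split.
  - apply: eq_bigr => r _; rewrite dlog_wedgeE mulrA; congr (_ / _).
    by apply: eq_bigr => i _; rewrite GE.
  - move=> j /= jm; rewrite (_ : j = ord_max); last exact: val_inj.
    by rewrite !mxE pt1 v0 mulr0 addr0.
  - by move=> i iI; rewrite -GE Gt.
move: (congr1 (horner^~ 0) P0); rewrite /= horner0 horner_sum.
under eq_bigr do rewrite hornerZ horner_prod (eq_bigr _ (fun i _ => GE i 0)) scale0r addr0.
have cardS r : #|S r| = #|S r0| by rewrite (S_sub r).2.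
move=> /(sum_prod_setD_eq0 (fun r => (S_sub r).1) S_inj cardS pt_off)/eqP.
rewrite mulf_eq0 => /orP[/eqP //|]; apply: contraTeq => _.
exact (det_wedge_minor_neq0 L_last (row_free_setU_last S0I cardS0)
  (last_notin_subset S0I) cardS0).
Qed.

End DlogWedgeFree.

Theorem lemma4p8 (R : realType) (n d k : nat) (L : 'I_d -> 'rV[R[i]]_n)
    (I : {set 'I_d}) :
  (0 < n)%N -> (0 < d)%N ->
  is_arrangement L -> indecomposable L -> last_is_xn L ->
  (forall i, i \in I -> (val i < d.-1)%N) ->
  #|I| = (k - 1)%N ->
  (n <= k)%N ->
  normal_crossings L (I :|: [set i | val i == d.-1]) ->
  VIprime_dim L I 'C(k - 1, n - 1).
Proof.
case: n L => [//|m] L _ d_gt0 _ _ L_xn I_lt cardI _.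
have last_lt : (d.-1 < d)%N by rewrite prednK.
pose last := Ordinal last_lt.
have -> : [set i : 'I_d | val i == d.-1] = [set last] by apply/setP => i; rewrite !inE.
move=> nc; have L_last j : (L last 0 j != 0) = (val j == m) by rewrite L_xn.
have last_notin_I : last \notin I by apply/negP => /I_lt; rewrite ltnn.
rewrite subSS subn0 /VIprime_dim; set s := filter _ _.
have s_uniq : uniq s by rewrite filter_uniq ?enum_uniq.
have mem_s S : (S \in s) = (S \subset I) && (#|S| == m).
  by rewrite mem_filter mem_enum andbT.
have <- : size s = 'C(k - 1, m).
  rewrite -cardI -cards_draws -(card_uniqP s_uniq).
  by apply: eq_card => S; rewrite mem_s inE.
apply: (span_dim_of_free (j0 := set0) s_uniq).
apply: (dlog_wedge_free L_last last_notin_I nc s_uniq) => S.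
by rewrite mem_s => /andP[-> /eqP].
Qed.
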